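(* Let $\mathcal{M}_1,\mathcal{M}_2$ be real QMMs (all unitary and measurement matrices have real entries) with common alphabets $\Sigma,\Gamma$, state spaces of dimensions $n_1,n_2$, and initial density operators $\rho_1,\rho_2$. Let $N'=\frac12 n_1(n_1+1)+\frac12 n_2(n_2+1)-1$. Then $(\mathcal{M}_1,\rho_1)\sim(\mathcal{M}_2,\rho_2)\iff(\mathcal{M}_1,\rho_1)\sim^{N'}(\mathcal{M}_2,\rho_2)$, and for every $k\in\mathbb{N}$, $(\mathcal{M}_1,\rho_1)\sim_k(\mathcal{M}_2,\rho_2)\iff(\mathcal{M}_1,\rho_1)\sim_k^{N'}(\mathcal{M}_2,\rho_2)$.
   Context: A quantum Mealy machine (QMM) is a tuple $\mathcal{M}=(\Sigma,\Gamma,\mathcal{H},U,M)$ where $\Sigma,\Gamma$ are finite alphabets, $\mathcal{H}$ a finite-dimensional complex Hilbert space, $U=\{U_\sigma\}_{\sigma\in\Sigma}$ unitary operators on $\mathcal{H}$, $M=\{M_\gamma\}_{\gamma\in\Gamma}$ linear operators with $\sum_\gamma M_\gamma^\dagger M_\gamma=I$. For a word $a$, $|a|$ is its length, $a[l:r]=a[l]\cdots a[r]$ (empty if $l>r$), $U_a=U_{a[|a|]}\cdots U_{a[1]}$, $U_\epsilon=I$. A scheduler for $a\in\Sigma^*$ is a finite non-decreasing integer sequence $\mathcal{S}=(s_1\le\dots\le s_{|\mathcal{S}|})$ in $\{0,\dots,|a|\}$ (possibly empty). With $s_0=0$, $s_{|\mathcal{S}|+1}=|a|$, $a_i=a[s_{i-1}+1:s_i]$.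 For $b\in\Gamma^{|\mathcal{S}|}$, $V_{b|a,\mathcal{S}}=U_{a_{|\mathcal{S}|+1}}M_{b_{|\mathcal{S}|}}U_{a_{|\mathcal{S}|}}\cdots M_{b_1}U_{a_1}$ and $\Pr^{\mathcal{M}}_\rho(b|a,\mathcal{S})=\operatorname{tr}(V_{b|a,\mathcal{S}}\rho V_{b|a,\mathcal{S}}^\dagger)$. $(\mathcal{M}_1,\rho_1)\sim(\mathcal{M}_2,\rho_2)$ means $\Pr^{\mathcal{M}_1}_{\rho_1}(b|a,\mathcal{S})=\Pr^{\mathcal{M}_2}_{\rho_2}(b|a,\mathcal{S})$ for all $a\in\Sigma^*$, schedulers $\mathcal{S}$ for $a$, $b\in\Gamma^{|\mathcal{S}|}$; $\sim_k$ restricts to $|\mathcal{S}|\le k$; $\sim^m$ to $|a|+|\mathcal{S}|\le m$; $\sim^m_k$ to both. *)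

From HB Require Import structures.
From mathcomp Require Import all_boot all_order all_algebra.
Set Implicit Arguments. Unset Strict Implicit. Unset Printing Implicit Defensive.
Import Order.TTheory GRing.Theory Num.Theory.
Local Open Scope ring_scope.

Section QMM.
Variable C : numClosedFieldType.

Definition adjmx (m n : nat) (A : 'M[C]_(m, n)) : 'M[C]_(n, m) :=
  (map_mx Num.conj A)^T.

Record qmm (S G : finType) (n : nat) := QMM {
  qU : S -> 'M[C]_n ;
  qM : G -> 'M[C]_n }.

Definition is_unitary n (A : 'M[C]_n) : Prop := A *m adjmx A = 1%:M.

Definition is_qmm (S G : finType) n (Q : qmm S G n) : Prop :=
  (forall s, is_unitary (qU Q s)) /\
  \sum_(g : G) (adjmx (qM Q g) *m qM Q g) = 1%:M.

Definition real_mx m n (A : 'M[C]_(m, n)) : Prop :=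
  forall i j, A i j \is Num.real.

Definition is_real_qmm (S G : finType) n (Q : qmm S G n) : Prop :=
  is_qmm Q /\ (forall s, real_mx (qU Q s)) /\ (forall g, real_mx (qM Q g)).

Definition is_density n (rho : 'M[C]_n) : Prop :=
  adjmx rho = rho /\
  (forall v : 'cV[C]_n, 0 <= (adjmx v *m rho *m v) 0 0) /\
  \tr rho = 1.

(* U_a = U_{a[|a|]} ... U_{a[1]} *)
Definition Uword (S G : finType) n (Q : qmm S G n) (a : seq S) : 'M[C]_n :=
  foldr (fun s acc => acc *m qU Q s) 1%:M a.

Definition scheduler (S : finType) (a : seq S) (sch : seq nat) : Prop :=
  sorted leq sch /\ all (fun s => s <= size a)%N sch.

(* V_{b|a,sch}, built from the previous cut point prev *)
Fixpoint Vop (S G : finType) n (Q : qmm S G n) (a : seq S)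
    (prev : nat) (sch : seq nat) (b : seq G) : 'M[C]_n :=
  match sch, b with
  | s1 :: sch', b1 :: b' =>
      Vop Q a s1 sch' b' *m qM Q b1 *m Uword Q (drop prev (take s1 a))
  | _, _ => Uword Q (drop prev a)
  end.

Definition Vmx (S G : finType) n (Q : qmm S G n) (a : seq S) (sch : seq nat)
    (b : seq G) : 'M[C]_n := Vop Q a 0 sch b.

Definition Pr (S G : finType) n (Q : qmm S G n) (rho : 'M[C]_n)
    (a : seq S) (sch : seq nat) (b : seq G) : C :=
  \tr (Vmx Q a sch b *m rho *m adjmx (Vmx Q a sch b)).

Definition qmm_equiv_on (P : nat -> nat -> bool) (S G : finType) n1 n2
    (Q1 : qmm S G n1) (rho1 : 'M[C]_n1) (Q2 : qmm S G n2) (rho2 : 'M[C]_n2)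
    : Prop :=
  forall (a : seq S) (sch : seq nat) (b : seq G),
    scheduler a sch -> size b = size sch -> P (size a) (size sch) ->
    Pr Q1 rho1 a sch b = Pr Q2 rho2 a sch b.

Definition qmm_equiv S G n1 n2 Q1 rho1 Q2 rho2 :=
  @qmm_equiv_on (fun _ _ => true) S G n1 n2 Q1 rho1 Q2 rho2.
Definition qmm_equiv_k (k : nat) S G n1 n2 Q1 rho1 Q2 rho2 :=
  @qmm_equiv_on (fun _ s => s <= k)%N S G n1 n2 Q1 rho1 Q2 rho2.
Definition qmm_equiv_m (m : nat) S G n1 n2 Q1 rho1 Q2 rho2 :=
  @qmm_equiv_on (fun l s => l + s <= m)%N S G n1 n2 Q1 rho1 Q2 rho2.
Definition qmm_equiv_mk (m k : nat) S G n1 n2 Q1 rho1 Q2 rho2 :=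
  @qmm_equiv_on (fun l s => (s <= k) && (l + s <= m))%N S G n1 n2 Q1 rho1 Q2 rho2.

End QMM.

From HB Require Import structures.
From mathcomp Require Import all_boot all_order all_algebra.
From mathcomp Require Import zify ring.
Set Implicit Arguments. Unset Strict Implicit. Unset Printing Implicit Defensive.
Import Order.TTheory GRing.Theory Num.Theory.
Local Open Scope ring_scope.

(* For a real QMM, [Pr = tr (V^T V rho)], and the symmetric matrix [V^T V] of
   a word evolves linearly, letter by letter, by [Y |-> X^T Y X].  Hence the
   pair of these matrices for the two machines lives in a space of dimension
   [N' + 1], and equivalence on a set of words says that one fixed linear
   functional vanishes on the vectors those words reach.  Let [F(l, r)] be the
   span reached by words of length [<= l] with [<= r] measurements.  Once
   [F(-, r - 1)] is constant, a single step [F(l + 1, r) = F(l, r)] makes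
   [F(-, r)] constant, and before that each step raises the rank.  Inductively
   in [r], [F(-, r)] is constant from some length [s] with
   [s + rank v0 <= rank F(s, r) <= N' + 1], hence from length [N'] on. *)

Section WordSpan.
Variables (F : fieldType) (D : nat) (X : finType) (T : X -> 'M[F]_D).
Variables (marked : pred X) (v0 : 'rV[F]_D).

Definition word_vec (w : seq X) : 'rV[F]_D := foldr (fun x v => v *m T x) v0 w.

(* The span of the [word_vec w] with [size w <= l] and [count marked w <= r]. *)
Fixpoint word_span (l r : nat) : 'M[F]_D :=
  if l is l'.+1 then
    (<<v0>> + \sum_(x | ~~ marked x) (word_span l' r *m T x)
      + if r is r'.+1 then \sum_(x | marked x) (word_span l' r' *m T x) else 0)%MS
  else <<v0>>%MS.

Lemma v0_sub_word_span l r : (v0 <= word_span l r)%MS.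
Proof.
case: l => [|l] /=; first by rewrite genmxE.
by rewrite -addsmxA; apply: submx_trans (addsmxSl _ _); rewrite genmxE.
Qed.

Lemma word_spanS_sub l l' r r' : (r <= r')%N ->
  (word_span l r <= word_span l' r')%MS ->
  (word_span l r.-1 <= word_span l' r'.-1)%MS ->
  (word_span l.+1 r <= word_span l'.+1 r')%MS.
Proof.
move=> le_rr' sub_r sub_r1 /=.
apply: addsmxS; first apply: addsmxS => //.
  by apply: sumsmxS => x _; apply: submxMr.
case: r r' le_rr' {sub_r} sub_r1 => [|r] [|r'] //= _; rewrite ?sub0mx // => sub_r1.
by apply: sumsmxS => x _; apply: submxMr.
Qed.

Lemma word_span_mono l l' r r' : (l <= l')%N -> (r <= r')%N ->
  (word_span l r <= word_span l' r')%MS.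
Proof.
elim: l l' r r' => [|l IH] l' r r' le_ll' le_rr'.
  by rewrite /= genmxE v0_sub_word_span.
case: l' le_ll' => [|l'] // le_ll'.
by apply: word_spanS_sub; rewrite ?IH // -!subn1 leq_sub2r.
Qed.

Lemma word_vec_sub_span w l r : (size w <= l)%N -> (count marked w <= r)%N ->
  (word_vec w <= word_span l r)%MS.
Proof.
elim: w l r => [|x w IH] l r; first by rewrite v0_sub_word_span.
case: l => [|l] //= le_wl.
case marked_x: (marked x) => /= le_wr.
  case: r le_wr => [|r] // le_wr.
  apply: submx_trans (addsmxSr _ _).
  by apply: (sumsmx_sup x) => //; apply: submxMr; apply: IH.
apply: submx_trans (addsmxSl _ _); apply: submx_trans (addsmxSr _ _).
by apply: (sumsmx_sup x); rewrite ?marked_x //; apply: submxMr; apply: IH.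
Qed.

Lemma word_span_sub_kermx l r (c : 'cV[F]_D) :
  (forall w, (size w <= l)%N -> (count marked w <= r)%N -> word_vec w *m c = 0) ->
  (word_span l r <= kermx c)%MS.
Proof.
elim: l r c => [|l IH] r c ann /=.
  by rewrite genmxE sub_kermx; apply/eqP; apply: (ann [::]).
have v0_ker : (<<v0>> <= kermx c)%MS.
  by rewrite genmxE sub_kermx; apply/eqP; apply: (ann [::]).
have T_ker x r' : (marked x + r' <= r)%N ->
    (word_span l r' *m T x <= kermx c)%MS.
  move=> le_r; rewrite sub_kermx -mulmxA -sub_kermx; apply: IH => w le_wl le_wr.
  by rewrite mulmxA; apply: (ann (x :: w)) => //=; lia.
rewrite !addsmx_sub v0_ker /=; apply/andP; split.
  by apply/sumsmx_subP => x /negbTE unmarked; apply: T_ker; rewrite unmarked.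
case: r ann T_ker => [|r] _ T_ker; first by rewrite sub0mx.
by apply/sumsmx_subP => x marked_x; apply: T_ker; rewrite marked_x.
Qed.

Definition span_stable r s := forall l, (word_span l r <= word_span s r)%MS.

Lemma span_stable_from r s0 s : (0 < r -> span_stable r.-1 s0)%N -> (s0 <= s)%N ->
  (word_span s.+1 r <= word_span s r)%MS -> span_stable r s.
Proof.
move=> stable_prev le_s0s stop l.
have [le_ls|lt_sl] := leqP l s; first exact: word_span_mono.
rewrite -(subnKC (ltnW lt_sl)); elim: (l - s)%N => [|j IH]; first by rewrite addn0.
apply: submx_trans stop; rewrite addnS; apply: word_spanS_sub => //.
case: r stable_prev IH => [|r] stable_prev IH //=.
exact: submx_trans (stable_prev isT (s + j)) (word_span_mono le_s0s (leqnn r)).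
Qed.

Lemma span_stable_exists r s0 : (0 < r -> span_stable r.-1 s0)%N ->
  exists s, [/\ (s0 <= s)%N, span_stable r s &
    (\rank (word_span s0 r) + (s - s0) <= \rank (word_span s r))%N].
Proof.
move=> stable_prev.
suff : forall l, (s0 <= l)%N -> exists s, [/\ (l <= s)%N, span_stable r s &
    (\rank (word_span l r) + (s - l) <= \rank (word_span s r))%N].
  by apply.
move=> l.
have [m] := ubnP (D - \rank (word_span l r)); elim: m l => // m IH l.
rewrite ltnS => le_rank le_s0l.
have [stop|grows] := boolP (word_span l.+1 r <= word_span l r)%MS.
  exists l; rewrite subnn addn0; split=> //.
  exact: span_stable_from stable_prev le_s0l stop.
have : (word_span l r < word_span l.+1 r)%MS.
  by rewrite ltmxE word_span_mono.
rewrite ltmxErank => /andP[_ lt_rank].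
have le_rankS := rank_leq_col (word_span l.+1 r).
have [||s [le_ls stable_s le_rs]] := IH l.+1; try lia.
by exists s; split=> //; lia.
Qed.

Lemma span_stable_rank r :
  exists2 s, span_stable r s & (s + \rank v0 <= \rank (word_span s r))%N.
Proof.
elim: r => [|r [s0 stable0 rank0]].
  have [//|s [_ stable_s le_rs]] := @span_stable_exists 0 0.
  by exists s => //; move: le_rs; rewrite /= genmxE subn0 addnC.
have [//|s [le_s0s stable_s le_rs]] := @span_stable_exists r.+1 s0.
exists s => //.
have := mxrankS (word_span_mono (leqnn s0) (leqnSn r)); lia.
Qed.

Lemma word_span_sub_bound l r : v0 != 0 -> (word_span l r <= word_span D.-1 r)%MS.
Proof.
move=> nz_v0; have [s stable_s le_rs] := span_stable_rank r.
apply: submx_trans (stable_s l) (word_span_mono _ (leqnn r)).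
have := rank_leq_col (word_span s r).
have : (0 < \rank v0)%N by rewrite lt0n mxrank_eq0.
rewrite -subn1; lia.
Qed.

Theorem word_annihilation k (c : 'cV[F]_D) :
  (forall w, (size w <= D.-1)%N -> (count marked w <= k)%N -> word_vec w *m c = 0) ->
  forall w, (count marked w <= k)%N -> word_vec w *m c = 0.
Proof.
move=> ann_short w le_wk.
have [v0_0|nz_v0] := eqVneq v0 0.
  suff -> : word_vec w = 0 by rewrite mul0mx.
  by elim: w {le_wk} => //= x w ->; rewrite mul0mx.
apply/eqP; rewrite -sub_kermx.
apply: submx_trans (word_vec_sub_span (leqnn _) le_wk) _.
apply: submx_trans (word_span_sub_bound _ _ nz_v0) _.
exact: word_span_sub_kermx.
Qed.

End WordSpan.

Definition lin1_mx_of (R : pzRingType) m k (f : 'rV[R]_m -> 'rV[R]_k)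
    (f_lin : linear f) : 'M[R]_(m, k) :=
  let g : {linear 'rV[R]_m -> 'rV[R]_k} :=
    HB.pack f (GRing.isLinear.Build _ _ _ _ f f_lin) in
  lin1_mx g.

Lemma mul_rV_lin1_of (R : pzRingType) m k (f : 'rV[R]_m -> 'rV[R]_k)
    (f_lin : linear f) u :
  u *m lin1_mx_of f_lin = f u.
Proof. exact: mul_rV_lin1. Qed.

(* The lower triangle [{(i, j) | j <= i < n}], indexing the free entries of a
   symmetric [n x n] matrix. *)
Definition tri_index n := {i : 'I_n & 'I_i.+1}.

Lemma card_tri_index n : #|{: tri_index n}| = ((n * n.+1) %/ 2)%N.
Proof.
have sum_succ : (2 * \sum_(i < n) i.+1 = n * n.+1)%N.
  elim: n => [|n IH]; first by rewrite big_ord0.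
  by rewrite big_ord_recr /= mulnDr IH; lia.
rewrite card_tagged -sum_succ mulKn // -big_enum /= sumnE big_map.
by apply: eq_bigr => i _; rewrite card_ord.
Qed.

Section SymEncoding.
Variables (R : pzRingType) (n : nat).

Definition sym_vec (Y : 'M[R]_n) : 'rV[R]_#|{: tri_index n}| :=
  \row_t (let p := enum_val t in Y (tag p) (widen_ord (ltn_ord (tag p)) (tagged p))).

Definition tri_of_pair (i j : 'I_n) : tri_index n :=
  Tagged (fun k : 'I_n => 'I_k.+1) (@inord (if (i <= j)%N then j else i) (minn i j)).

Definition sym_mx (v : 'rV[R]_#|{: tri_index n}|) : 'M[R]_n :=
  \matrix_(i, j) v 0 (enum_rank (tri_of_pair i j)).

Lemma sym_vecK Y : Y^T = Y -> sym_mx (sym_vec Y) = Y.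
Proof.
move=> symY; apply/matrixP => i j; rewrite !mxE enum_rankK /=.
have -> : widen_ord (ltn_ord (if (i <= j)%N then j else i))
    (@inord (if (i <= j)%N then j else i) (minn i j)) = if (i <= j)%N then i else j.
  by apply: val_inj; case: (leqP i j) => ij; rewrite /= inordK ?ltnS // ltnW.
by case: (leqP i j) => // _; rewrite -[in RHS]symY mxE.
Qed.

Lemma sym_vec_linearP a (Y Z : 'M[R]_n) :
  sym_vec (a *: Y + Z) = a *: sym_vec Y + sym_vec Z.
Proof. by apply/matrixP => i j; rewrite !mxE /= !mxE. Qed.

Lemma sym_mx_linearP a (u v : 'rV[R]_#|{: tri_index n}|) :
  sym_mx (a *: u + v) = a *: sym_mx u + sym_mx v.
Proof. by apply/matrixP => i j; rewrite !mxE. Qed.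

End SymEncoding.

Section QMMWords.
Variables (C : numClosedFieldType) (S G : finType).

(* A scheduled run [(a, sch, b)] is read as a single word over [S + G],
   unitaries [inl s] and measurement outcomes [inr g]. *)
Definition is_meas (x : S + G) : bool := if x is inr _ then true else false.

Definition letter_mx n (Q : qmm C S G n) (x : S + G) : 'M[C]_n :=
  match x with inl s => qU Q s | inr g => qM Q g end.

Definition word_mx n (Q : qmm C S G n) (w : seq (S + G)) : 'M[C]_n :=
  foldr (fun x A => A *m letter_mx Q x) 1%:M w.

Lemma word_mx_cat n (Q : qmm C S G n) u v :
  word_mx Q (u ++ v) = word_mx Q v *m word_mx Q u.
Proof.
elim: u => [|x u IH]; first by rewrite mulmx1.
by rewrite /word_mx /= -/(word_mx Q (u ++ v)) IH mulmxA.
Qed.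

Lemma word_mx_map_inl n (Q : qmm C S G n) a : word_mx Q (map inl a) = Uword Q a.
Proof. by elim: a => //= s a ->. Qed.

Fixpoint sched_word (a : seq S) (p : nat) (sch : seq nat) (b : seq G) :
    seq (S + G) :=
  match sch, b with
  | s1 :: sch', b1 :: b' =>
      map inl (drop p (take s1 a)) ++ inr b1 :: sched_word a s1 sch' b'
  | _, _ => map inl (drop p a)
  end.

Lemma Vop_sched_word n (Q : qmm C S G n) a p sch b :
  Vop Q a p sch b = word_mx Q (sched_word a p sch b).
Proof.
elim: sch p b => [|s1 sch IH] p [|b1 b] /=; rewrite ?word_mx_map_inl //.
by rewrite word_mx_cat word_mx_map_inl /= IH.
Qed.

Lemma count_sched_word a p sch b : (count is_meas (sched_word a p sch b) <= size sch)%N.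
Proof.
have count_inl (u : seq S) : count is_meas (map inl u) = 0%N.
  by rewrite count_map (@eq_count _ _ pred0) ?count_pred0.
elim: sch p b => [|s1 sch IH] p [|b1 b] /=; rewrite ?count_inl //.
by rewrite count_cat count_inl /= add1n ltnS.
Qed.

Fixpoint split_word (w : seq (S + G)) : seq S * seq nat * seq G :=
  match w with
  | [::] => ([::], [::], [::])
  | inl s :: w' => let: (a, sch, b) := split_word w' in (s :: a, map succn sch, b)
  | inr g :: w' => let: (a, sch, b) := split_word w' in (a, 0%N :: sch, g :: b)
  end.

Lemma Vop_cons_shift n (Q : qmm C S G n) s a p sch b :
  Vop Q (s :: a) p.+1 (map succn sch) b = Vop Q a p sch b.
Proof. by elim: sch p b => [|s1 sch IH] p [|b1 b] //=; rewrite IH. Qed.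

Lemma Vop_cons n (Q : qmm C S G n) s a sch b :
  Vop Q (s :: a) 0 (map succn sch) b = Vop Q a 0 sch b *m qU Q s.
Proof.
case: sch b => [|s1 sch] [|b1 b] //=; rewrite ?drop0 //.
by rewrite Vop_cons_shift !mulmxA.
Qed.

Lemma split_wordV n (Q : qmm C S G n) w :
  let: (a, sch, b) := split_word w in word_mx Q w = Vmx Q a sch b.
Proof.
rewrite /Vmx; elim: w => [|[s|g] w IH] //=.
  by case: (split_word w) IH => [[a sch] b] /= ->; rewrite Vop_cons.
by case: (split_word w) IH => [[a sch] b] /= ->; rewrite take0 mulmx1.
Qed.

Lemma split_word_spec w :
  let: (a, sch, b) := split_word w in
  [/\ scheduler a sch, size b = size sch, size sch = count is_meas w &
      (size a + size sch = size w)%N].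
Proof.
elim: w => [|[s|g] w IH] //=;
  case: (split_word w) IH => [[a sch] b] [[sorted_sch sch_le] size_b count_w size_w].
  rewrite size_map; split=> //; last by rewrite -size_w addSn.
  by split; rewrite ?sorted_map ?all_map //; apply: sub_all sch_le => x.
split=> /=; [|by rewrite size_b|by rewrite count_w|by rewrite addnS size_w].
by split=> //=; case: sch sorted_sch {size_b count_w size_w sch_le} => //= x sch ->.
Qed.

Lemma real_mxM m n p (A : 'M[C]_(m, n)) (B : 'M[C]_(n, p)) :
  real_mx A -> real_mx B -> real_mx (A *m B).
Proof. by move=> realA realB i j; rewrite mxE rpred_sum // => k _; apply: rpredM. Qed.

Lemma real_word_mx n (Q : qmm C S G n) w : is_real_qmm Q -> real_mx (word_mx Q w).
Proof.
move=> [_ [realU realM]]; elim: w => [|x w IH] /=.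
  by move=> i j; rewrite mxE rpredMn ?real1.
by apply: real_mxM => //; case: x.
Qed.

Lemma adjmx_real m n (A : 'M[C]_(m, n)) : real_mx A -> adjmx A = A^T.
Proof.
by move=> realA; congr trmx; apply/matrixP => i j; rewrite mxE conj_Creal.
Qed.

Definition gram_word n (Q : qmm C S G n) w := (word_mx Q w)^T *m word_mx Q w.

Lemma gram_word_sym n (Q : qmm C S G n) w : (gram_word Q w)^T = gram_word Q w.
Proof. by rewrite /gram_word trmx_mul trmxK. Qed.

Lemma Pr_real_gram n (Q : qmm C S G n) rho a sch b w : is_real_qmm Q ->
  Vmx Q a sch b = word_mx Q w -> Pr Q rho a sch b = \tr (gram_word Q w *m rho).
Proof.
move=> realQ V_w; rewrite /Pr V_w adjmx_real; last exact: real_word_mx.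
by rewrite mxtrace_mulC mulmxA.
Qed.

End QMMWords.

Section PairEncoding.
Variables (C : numClosedFieldType) (S G : finType) (n1 n2 : nat).
Variables (Q1 : qmm C S G n1) (Q2 : qmm C S G n2).
Variables (rho1 : 'M[C]_n1) (rho2 : 'M[C]_n2).

Local Notation D := (#|{: tri_index n1}| + #|{: tri_index n2}|)%N.

Definition pair_vec w : 'rV[C]_D :=
  row_mx (sym_vec (gram_word Q1 w)) (sym_vec (gram_word Q2 w)).

Definition letter_fun (x : S + G) (v : 'rV[C]_D) : 'rV[C]_D :=
  row_mx (sym_vec ((letter_mx Q1 x)^T *m sym_mx (lsubmx v) *m letter_mx Q1 x))
         (sym_vec ((letter_mx Q2 x)^T *m sym_mx (rsubmx v) *m letter_mx Q2 x)).

Lemma letter_fun_linear x : linear (letter_fun x).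
Proof.
move=> a u v; rewrite /letter_fun !linearP !sym_mx_linearP.
rewrite !mulmxDr !mulmxDl -!scalemxAr -!scalemxAl !sym_vec_linearP.
by rewrite scale_row_mx add_row_mx.
Qed.

Definition letter_step x := lin1_mx_of (letter_fun_linear x).

Lemma pair_vec_word_vec w : pair_vec w = word_vec letter_step (pair_vec [::]) w.
Proof.
elim: w => [|x w IH] //=; rewrite -IH /letter_step mul_rV_lin1_of /letter_fun.
rewrite /pair_vec row_mxKl row_mxKr !sym_vecK ?gram_word_sym //.
by rewrite /gram_word /word_mx /= !trmx_mul !mulmxA.
Qed.

Definition Pr_diff_fun (v : 'rV[C]_D) : 'rV[C]_1 :=
  (\tr (sym_mx (lsubmx v) *m rho1) - \tr (sym_mx (rsubmx v) *m rho2))%:M.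

Lemma Pr_diff_fun_linear : linear Pr_diff_fun.
Proof.
move=> a u v; rewrite /Pr_diff_fun !linearP !sym_mx_linearP.
rewrite !mulmxDl -!scalemxAl !mxtraceD !mxtraceZ scale_scalar_mx -raddfD /=.
by congr (_%:M); ring.
Qed.

Definition Pr_diff := lin1_mx_of Pr_diff_fun_linear.

Lemma Pr_eq_pair_vec a sch b w : is_real_qmm Q1 -> is_real_qmm Q2 ->
  Vmx Q1 a sch b = word_mx Q1 w -> Vmx Q2 a sch b = word_mx Q2 w ->
  Pr Q1 rho1 a sch b = Pr Q2 rho2 a sch b <-> pair_vec w *m Pr_diff = 0.
Proof.
move=> real1 real2 V1 V2.
rewrite (Pr_real_gram rho1 real1 V1) (Pr_real_gram rho2 real2 V2).
rewrite /Pr_diff mul_rV_lin1_of /Pr_diff_fun /pair_vec row_mxKl row_mxKr.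
rewrite !sym_vecK ?gram_word_sym //; split=> [eq_Pr | /matrixP/(_ 0 0)].
  by apply/matrixP => i j; rewrite !ord1 eq_Pr subrr !mxE mul0rn.
by rewrite !mxE mulr1n => /eqP; rewrite subr_eq0 => /eqP.
Qed.

Lemma qmm_equiv_mk_k k : is_real_qmm Q1 -> is_real_qmm Q2 ->
  qmm_equiv_mk D.-1 k Q1 rho1 Q2 rho2 -> qmm_equiv_k k Q1 rho1 Q2 rho2.
Proof.
move=> real1 real2 eq_short a sch b sch_a size_b le_k.
have V_sched n (Q : qmm C S G n) := Vop_sched_word Q a 0 sch b.
apply/(Pr_eq_pair_vec real1 real2 (V_sched _ Q1) (V_sched _ Q2)).
have count_le_k := leq_trans (count_sched_word a 0 sch b) le_k.
rewrite pair_vec_word_vec; apply: word_annihilation count_le_k => w le_w le_kw.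
rewrite -pair_vec_word_vec.
have := split_word_spec w; have := split_wordV Q1 w; have := split_wordV Q2 w.
case: (split_word w) => [[a' sch'] b'] V2 V1 [sch_a' size_b' count_w size_w].
apply/(Pr_eq_pair_vec real1 real2 (esym V1) (esym V2)).
by apply: eq_short => //=; rewrite count_w le_kw -count_w size_w.
Qed.

End PairEncoding.

Theorem mainTheorem4 (C : numClosedFieldType) (S G : finType) (n1 n2 : nat)
    (Q1 : qmm C S G n1) (Q2 : qmm C S G n2)
    (rho1 : 'M[C]_n1) (rho2 : 'M[C]_n2) :
  is_real_qmm Q1 -> is_real_qmm Q2 ->
  is_density rho1 -> is_density rho2 ->
  let N' := ((n1 * n1.+1) %/ 2 + (n2 * n2.+1) %/ 2 - 1)%N in
  (qmm_equiv Q1 rho1 Q2 rho2 <-> qmm_equiv_m N' Q1 rho1 Q2 rho2) /\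
  (forall k : nat,
     qmm_equiv_k k Q1 rho1 Q2 rho2 <-> qmm_equiv_mk N' k Q1 rho1 Q2 rho2).
Proof.
move=> real1 real2 _ _ N'.
have eq_mk_k k : qmm_equiv_mk N' k Q1 rho1 Q2 rho2 -> qmm_equiv_k k Q1 rho1 Q2 rho2.
  by move=> eq_mk; apply: (qmm_equiv_mk_k real1 real2); rewrite !card_tri_index -subn1.
split=> [|k]; split.
- by move=> eq_all a sch b sch_a size_b _; apply: eq_all.
- move=> eq_short a sch b sch_a size_b _.
  apply: (eq_mk_k (size sch)) => // a' sch' b' sch_a' size_b' /andP[_ le_N'].
  exact: eq_short.
- by move=> eq_k a sch b sch_a size_b /andP[le_k _]; apply: eq_k.
- exact: eq_mk_k.
Qed.
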